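(* If $r\ge 2$, then the glued binary tree $GT(r)$ satisfies $\mu_{\rm o}(GT(r))=2^r$, and $GT(r)$ has exactly one $\mu_{\rm o}$-set.
   Context: A perfect binary tree of depth $r\ge1$ is a rooted tree in which every non-leaf vertex has exactly $2$ children and all leaves have depth $r$. The glued binary tree $GT(r)$ is obtained from two copies of the perfect binary tree of depth $r$ by pairwise identifying their leaves (via a fixed isomorphism of the copies). For $S\subseteq V(G)$, two vertices $u,v$ are $S$-visible if there exists a shortest $u,v$-path $P$ with $V(P)\cap S\subseteq\{u,v\}$; $S$ is a mutual-visibility set if every two vertices of $S$ are $S$-visible. $S$ is an outer mutual-visibility set if it is a mutual-visibility set and every pair $u\in S$, $v\in V(G)\setminus S$ is $S$-visible. A largest outer mutual-visibility set is a $\mu_{\rm o}$-set, and its size is the outer mutual-visibility number $\mu_{\rm o}(G)$. *)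

From mathcomp Require Import all_boot.
Set Implicit Arguments. Unset Strict Implicit. Unset Printing Implicit Defensive.

Section Visibility.
Variables (T : finType) (e : rel T).

(* A u,v-walk is given by the sequence p of vertices after u;
   its vertex list is u :: p and its length is size p. *)
Definition walk (u v : T) (p : seq T) : Prop := path e u p /\ last u p = v.

Definition shortest_path (u v : T) (p : seq T) : Prop :=
  walk u v p /\ forall q, walk u v q -> size p <= size q.

Definition visible (S : {set T}) (u v : T) : Prop :=
  exists p, shortest_path u v p /\
    forall x, x \in u :: p -> x \in S -> (x == u) || (x == v).

Definition mutual_visibility_set (S : {set T}) : Prop :=
  forall u v, u \in S -> v \in S -> visible S u v.

Definition outer_mutual_visibility_set (S : {set T}) : Prop :=
  mutual_visibility_set S /\
  forall u v, u \in S -> v \notin S -> visible S u v.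

Definition muo_set (S : {set T}) : Prop :=
  outer_mutual_visibility_set S /\
  forall S', outer_mutual_visibility_set S' -> #|S'| <= #|S|.

End Visibility.

(* Perfect binary tree of depth r in heap numbering: nodes 1 .. 2^(r+1)-1,
   children of k are 2k and 2k+1, leaves are 2^r .. 2^(r+1)-1.
   A vertex of GT(r) is a pair (b, k): b selects the copy of the tree.
   Leaves are identified across copies: a leaf is represented only with
   b = false.  Internal nodes (k < 2^r) exist in both copies. *)
Definition gt_valid (r : nat) (x : bool * 'I_(2 ^ r.+1)) : bool :=
  (0 < val x.2) && (~~ x.1 || (val x.2 < 2 ^ r)).

Definition GTV (r : nat) : finType := {x : bool * 'I_(2 ^ r.+1) | @gt_valid r x}.

Definition gt_parent (r : nat) (x y : GTV r) : bool :=
  ((val (val y).2)./2 == val (val x).2) &&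
  ((2 ^ r <= val (val y).2) || ((val x).1 == (val y).1)).

Definition GTadj (r : nat) : rel (GTV r) :=
  fun x y => gt_parent x y || gt_parent y x.

From Stdlib Require Import Classical.
From mathcomp Require Import all_boot zify.
Set Implicit Arguments. Unset Strict Implicit. Unset Printing Implicit Defensive.

(* A walk in GT(r) projects to a walk in the binary tree, so it is at least
   as long as the tree distance of its end indices; inside one copy this bound
   is attained, while a walk joining internal vertices of different copies
   has to pass through a leaf and is two steps longer.  Hence all internal
   vertices of a shortest path between two vertices of a common copy lie in
   that copy.
   Let S be an outer mutual-visibility set and x in S internal.  Every other
   vertex u of S on the side of x is a leaf outside the subtree of x:
   otherwise x lies on every shortest path from u to a suitable vertex of
   that copy (a child or the parent of x, or the other child of the root; the
   latter is internal because r >= 2).  So S has at most one internal vertex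
   per copy, and sending an internal x to the leftmost or rightmost leaf below
   it, according to its copy, injects S into the leaves: |S| <= 2^r, and the
   leaves themselves form an outer mutual-visibility set.  If |S| = 2^r and
   x in S is internal, the leaf at the other extreme below x is the image of
   an internal y of S in the other copy; a shortest path from a leaf of S to
   this common descendant of x and y meets the indices of x and y in
   different copies, which is impossible. *)

(** * Distance in the infinite binary tree *)

Definition tree_adj : rel nat := fun i j => (j./2 == i) || (i./2 == j).

Fixpoint tpath_rec (n a c : nat) : seq nat :=
  if n is n'.+1 then
    if a == c then [::]
    else if c < a then a./2 :: tpath_rec n' a./2 c
    else rcons (tpath_rec n' a c./2) c
  else [::].

(* The indices after [a] on the path from [a] to [c] in the binary tree with
   heap numbering: the larger index moves to its parent.  Each call lowers
   [a + c], so the fuel [a + c + 1] never runs out. *)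
Definition tpath (a c : nat) : seq nat := tpath_rec (a + c).+1 a c.

Definition tdist (a c : nat) : nat := size (tpath a c).

Lemma tpath_rec_fuel n m a c : a + c < n -> a + c < m -> tpath_rec n a c = tpath_rec m a c.
Proof.
elim: n m a c => [|n IH] [|m] a c //= Hn Hm.
by case: eqP => // /eqP ne; case: ltnP => H; rewrite (IH m) //; lia.
Qed.

Lemma tpathE a c : tpath a c =
  if a == c then [::]
  else if c < a then a./2 :: tpath a./2 c else rcons (tpath a c./2) c.
Proof.
rewrite [LHS]/tpath /=; case: eqP => // /eqP ne.
by case: ltnP => H; rewrite /tpath; congr cons + congr rcons; apply: tpath_rec_fuel; lia.
Qed.

Lemma tdistE a c : tdist a c =
  if a == c then 0
  else if c < a then (tdist a./2 c).+1 else (tdist a c./2).+1.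
Proof.
rewrite /tdist tpathE; case: eqP => // _.
by case: ltnP => _; rewrite ?size_rcons.
Qed.

Lemma sum_ind (P : nat -> nat -> Prop) :
  (forall a c, (forall a' c', a' + c' < a + c -> P a' c') -> P a c) ->
  forall a c, P a c.
Proof.
move=> IH a c; move: {2}(a + c) (leqnn (a + c)) => n.
elim: n a c => [|n IHn] a c Hn; apply: IH => a' c' H; last apply: IHn; lia.
Qed.

Lemma tdistnn a : tdist a a = 0.
Proof. by rewrite tdistE eqxx. Qed.

Lemma tdistC a c : tdist a c = tdist c a.
Proof.
move: a c; apply: sum_ind => a c IH.
rewrite tdistE [tdist c a]tdistE eq_sym.
case: eqP => // /eqP ne; case: (ltngtP c a) => H //; last by rewrite H eqxx in ne.
all: by rewrite IH //; lia.
Qed.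

Lemma tdist_half a j : tdist a j <= (tdist a j./2).+1 /\ tdist a j./2 <= (tdist a j).+1.
Proof.
move: a j; apply: sum_ind => a j IH.
case: (ltngtP j a) => H.
- rewrite tdistE [tdist a j./2]tdistE ifN_eqC ?H; last by lia.
  rewrite ifN_eqC; last by lia.
  have -> : j./2 < a by lia.
  have := IH a./2 j ltac:(lia); lia.
- rewrite [tdist a j]tdistE ifN_eqC; last by lia.
  by rewrite ltnNge (ltnW H) /=; lia.
- rewrite H tdistnn; split => //.
  rewrite tdistE; case: eqP => // _; case: ltnP => Hj; first by rewrite tdistnn.
  by have -> : a = 0 by lia; rewrite tdistnn.
Qed.

Lemma tdist_triangle a b c : tdist a c <= tdist a b + tdist b c.
Proof.
move: b c; apply: sum_ind => b c IH.
rewrite [tdist b c]tdistE; case: eqP => [->|ne]; first by rewrite addn0.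
have := tdist_half a b; have := tdist_half a c.
case: ltnP => H; [have := IH b./2 c | have := IH b c./2]; lia.
Qed.

Definition in_subtree (k j : nat) : Prop := exists i, j %/ 2 ^ i = k.

Lemma in_subtree_refl k : in_subtree k k.
Proof. by exists 0; rewrite expn0 divn1. Qed.

Lemma in_subtree_half k j : in_subtree k j./2 -> in_subtree k j.
Proof. by case=> i <-; exists i.+1; rewrite expnS divnMA -divn2. Qed.

Lemma in_subtreeP k j : in_subtree k j -> j = k \/ in_subtree k j./2.
Proof.
case=> [[|i]]; first by rewrite expn0 divn1; left.
by rewrite expnS divnMA -divn2 => h; right; exists i.
Qed.

Lemma in_subtree_leq k j : in_subtree k j -> k <= j.
Proof. by case=> i <-; apply: leq_div. Qed.

Lemma in_subtree_child k j : in_subtree k j -> j != k ->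
  exists2 c, c./2 = k & in_subtree c j.
Proof.
case=> [[|i]] <-; first by rewrite expn0 divn1 eqxx.
move=> _; exists (j %/ 2 ^ i); first by rewrite expnSr divnMA divn2.
by exists i.
Qed.

Lemma tdist_out_subtree a z : 0 < z -> ~ in_subtree z a ->
  tdist a z = (tdist a z./2).+1.
Proof.
move: a z; apply: sum_ind => a z IH z_gt0 out.
have ne : a != z by apply: contra_notN out => /eqP ->; apply: in_subtree_refl.
rewrite tdistE (negbTE ne); case: ltnP => // za.
have out' : ~ in_subtree z a./2 by move/in_subtree_half.
rewrite IH //; last by lia.
rewrite [tdist a z./2]tdistE ifN_eqC; last by lia.
by have -> : z./2 < a by lia.
Qed.

Lemma tdist_adj a w : tree_adj a w -> tdist a w <= 1.
Proof.
case/orP => /eqP <-.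
  by rewrite tdistC; have [_] := tdist_half w w; rewrite tdistnn.
by have [_] := tdist_half a a; rewrite tdistnn.
Qed.

Lemma tree_path_tdist a s : path tree_adj a s -> tdist a (last a s) <= size s.
Proof.
elim: s a => [|w s IH] a /=; first by rewrite tdistnn.
case/andP => /tdist_adj aw /IH ws.
by apply: leq_trans (tdist_triangle a w _) _; rewrite -add1n leq_add.
Qed.

Lemma tpath_last a c : last a (tpath a c) = c.
Proof.
move: a c; apply: sum_ind => a c IH; rewrite tpathE.
case: eqP => [-> //|ne]; case: ltnP => H /=; last by rewrite last_rcons.
by apply: IH; lia.
Qed.

Lemma tpath_path a c : path tree_adj a (tpath a c).
Proof.
move: a c; apply: sum_ind => a c IH; rewrite tpathE.
case: eqP => // ne; case: ltnP => H /=.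
  by rewrite /tree_adj eqxx orbT IH //; lia.
by rewrite rcons_path tpath_last /tree_adj eqxx IH //; lia.
Qed.

Lemma mem_tpath a c w : 0 < a -> 0 < c -> w \in tpath a c ->
  w = c \/ 0 < w <= (maxn a c)./2.
Proof.
move: a c; apply: sum_ind => a c IH a_gt0 c_gt0; rewrite tpathE.
case: eqP => // ne; case: ltnP => H.
  rewrite inE => /orP[/eqP ->|/IH]; first by right; lia.
  by case=> //; lia.
rewrite mem_rcons inE => /orP[/eqP ->|/IH]; first by left.
by case=> //; lia.
Qed.

Lemma path_exit_subtree k a s : path tree_adj a s ->
  in_subtree k a -> ~ in_subtree k (last a s) -> k./2 \in s.
Proof.
elim: s a => [|w s IH] a /=; first by move=> _ ka /(_ ka).
case/andP => /orP[]/eqP aw ws ka out.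
  have kw : in_subtree k w by apply: in_subtree_half; rewrite aw.
  by rewrite inE (IH w) ?orbT.
have [kw|kw] := classic (in_subtree k w); first by rewrite inE (IH w) ?orbT.
case: (in_subtreeP ka) => [ak|]; last by rewrite aw.
by rewrite inE -aw ak eqxx.
Qed.

Lemma path_enter_subtree k a s : path tree_adj a s ->
  ~ in_subtree k a -> in_subtree k (last a s) -> k \in s.
Proof.
elim: s a => [|w s IH] a /=; first by move=> _ /[apply].
case/andP => /orP[]/eqP aw ws out kl; last first.
  have [kw|kw] := classic (in_subtree k w); last by rewrite inE (IH w) ?orbT.
  by case: out; apply: in_subtree_half; rewrite aw.
have [kw|kw] := classic (in_subtree k w); last by rewrite inE (IH w) ?orbT.
case: (in_subtreeP kw) => [->|]; first by rewrite inE eqxx.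
by rewrite aw.
Qed.

(** * The glued binary tree *)

Section GluedTree.
Variable r : nat.
Local Notation V := (GTV r).
Local Notation adj := (@GTadj r).

Definition idx (x : V) : nat := val (val x).2.
Definition copy (x : V) : bool := (val x).1.
Definition is_leaf (x : V) : bool := 2 ^ r <= idx x.
Definition on_side (b : bool) (x : V) : bool := is_leaf x || (copy x == b).
Definition leaves : {set V} := [set x | is_leaf x].

Lemma idx_gt0 x : 0 < idx x.
Proof. by case: x => [[b k] valid]; case/andP: (valid). Qed.

Lemma idx_lt x : idx x < 2 ^ r.+1.
Proof. exact: ltn_ord. Qed.

Lemma idx_ltn x : (idx x < 2 ^ r) = ~~ is_leaf x.
Proof. exact: ltnNge. Qed.

Lemma copy_leaf x : is_leaf x -> copy x = false.
Proof.
case: x => [[[] k] valid] //; case/andP: (valid) => _ k_lt.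
by rewrite /is_leaf /idx /= leqNgt; move: k_lt => /= ->.
Qed.

Lemma idx_copy_inj x y : idx x = idx y -> copy x = copy y -> x = y.
Proof.
case: x y => [[b k] hx] [[b' k'] hy]; rewrite /idx /copy /= => Ek Eb.
by apply: val_inj; congr pair => //; apply: val_inj.
Qed.

Lemma on_side_internal b x : ~~ is_leaf x -> on_side b x = (copy x == b).
Proof. by rewrite /on_side => /negbTE ->. Qed.

Lemma on_side_leaf b x : is_leaf x -> on_side b x.
Proof. by rewrite /on_side => ->. Qed.

Lemma two_expS_gt1 : 1 < 2 ^ r.+1.
Proof. by rewrite -{1}(expn0 2) ltn_exp2l. Qed.

Definition ord_of (k : nat) : 'I_(2 ^ r.+1) := insubd (Ordinal two_expS_gt1) k.
Definition gt_root : V := exist _ (false, Ordinal two_expS_gt1) isT.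

(* The vertex with index [k] in copy [b]; the copy is ignored for a leaf index,
   and an index outside [1, 2^(r+1)) yields [gt_root]. *)
Definition vertex (b : bool) (k : nat) : V := insubd gt_root (b && (k < 2 ^ r), ord_of k).

Section Vertex.
Variables (b : bool) (k : nat).
Hypothesis k_range : 0 < k < 2 ^ r.+1.

Let vertex_valid : gt_valid (b && (k < 2 ^ r), ord_of k).
Proof.
case/andP: k_range => k_gt0 k_lt.
by rewrite /gt_valid /= /ord_of val_insubd k_lt k_gt0 /=; case: b; case: (k < 2 ^ r).
Qed.

Lemma idx_vertex : idx (vertex b k) = k.
Proof.
rewrite /idx /vertex val_insubd vertex_valid /= /ord_of val_insubd.
by case/andP: k_range => _ ->.
Qed.

Lemma copy_vertex : copy (vertex b k) = b && (k < 2 ^ r).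
Proof. by rewrite /copy /vertex val_insubd vertex_valid. Qed.

Lemma on_side_vertex : on_side b (vertex b k).
Proof. by rewrite /on_side /is_leaf idx_vertex copy_vertex; case: leqP; rewrite ?andbT ?eqxx. Qed.

End Vertex.

Lemma vertex_idx b x : on_side b x -> vertex b (idx x) = x.
Proof.
have x_range : 0 < idx x < 2 ^ r.+1 by rewrite idx_gt0 idx_lt.
move=> xb; apply: idx_copy_inj; first exact: idx_vertex.
rewrite copy_vertex //; case/orP: xb => [leaf|/eqP <-].
  by rewrite copy_leaf // idx_ltn leaf andbF.
case cx: (copy x) => //=; rewrite idx_ltn; apply/negP => /copy_leaf.
by rewrite cx.
Qed.

Lemma adjE x y : adj x y =
  ((idx y)./2 == idx x) && (is_leaf y || (copy x == copy y)) ||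
  ((idx x)./2 == idx y) && (is_leaf x || (copy y == copy x)).
Proof. by []. Qed.

Lemma adj_sym x y : adj x y = adj y x.
Proof. exact: orbC. Qed.

Lemma adj_tree x y : adj x y -> tree_adj (idx x) (idx y).
Proof. by case/orP => /andP[xy _]; rewrite /tree_adj xy ?orbT. Qed.

Lemma adj_internal_copy x y : adj x y -> ~~ is_leaf x -> ~~ is_leaf y -> copy x = copy y.
Proof.
rewrite adjE => + /negbTE xl /negbTE yl; rewrite xl yl /= => /orP[]/andP[_ /eqP] //.
Qed.

Lemma adj_vertex b i j : 0 < i < 2 ^ r.+1 -> 0 < j < 2 ^ r.+1 ->
  tree_adj i j -> adj (vertex b i) (vertex b j).
Proof.
have parent k : 0 < k./2 -> k < 2 ^ r.+1 -> adj (vertex b k./2) (vertex b k).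
  move=> k2_gt0 k_lt; have k2_lt : k./2 < 2 ^ r by move: k_lt; rewrite expnS; lia.
  have k_range : 0 < k < 2 ^ r.+1 by apply/andP; split; lia.
  have k2_range : 0 < k./2 < 2 ^ r.+1 by apply/andP; split; rewrite ?expnS; lia.
  rewrite adjE /is_leaf !idx_vertex // !copy_vertex // eqxx k2_lt andbT /=.
  by case: (leqP (2 ^ r) k); rewrite ?andbT ?eqxx ?orbT.
move=> /andP[i_gt0 i_lt] /andP[j_gt0 j_lt] /orP[]/eqP E.
  by rewrite -E parent // E.
by rewrite adj_sym -E parent // E.
Qed.

Lemma walk_tree u v p : walk adj u v p ->
  path tree_adj (idx u) (map idx p) /\ last (idx u) (map idx p) = idx v.
Proof.
case=> up <-; rewrite last_map; split => //.
by rewrite path_map; apply: sub_path up => x y /adj_tree.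
Qed.

Lemma walk_tdist u v p : walk adj u v p -> tdist (idx u) (idx v) <= size p.
Proof. by case/walk_tree => /tree_path_tdist + <-; rewrite size_map. Qed.

Lemma walk_split u v p w : walk adj u v p -> w \in u :: p ->
  exists p1 p2, [/\ p = p1 ++ p2, walk adj u w p1 & walk adj w v p2].
Proof.
case=> up <-; rewrite inE; case: eqP => [->|_] /= wp; first by exists [::], p.
case/splitPr: wp up => p1 p2; rewrite -cat_rcons cat_path last_rcons => /andP[up1 wp2].
by exists (rcons p1 w), p2; split => //; split; rewrite ?last_cat ?last_rcons.
Qed.

Lemma path_internal_copy x p : path adj x p -> all (predC is_leaf) (x :: p) ->
  copy (last x p) = copy x.
Proof.
elim: p x => [|w p IH] x //= /andP[xw wp] /and3P[xl wl pl].
by rewrite IH /= ?wl // (adj_internal_copy xw).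
Qed.

Lemma walk_across_copies u v p : walk adj u v p ->
  ~~ is_leaf u -> ~~ is_leaf v -> copy u != copy v ->
  tdist (idx u) (idx v) + 2 <= size p.
Proof.
move=> uvp ul vl; have [up uv] := uvp.
have [/hasP[z zp zl] _|] := boolP (has is_leaf (u :: p)); last first.
  by rewrite -all_predC => /(path_internal_copy up); rewrite uv => ->; rewrite eqxx.
have [p1 [p2 [-> uz vz]]] := walk_split uvp zp.
have off_z x : ~~ is_leaf x -> ~ in_subtree (idx z) (idx x).
  by rewrite -idx_ltn => x_lt /in_subtree_leq; move: zl; rewrite /is_leaf; lia.
have := walk_tdist uz; rewrite (tdist_out_subtree (idx_gt0 z) (off_z u ul)).
have := walk_tdist vz; rewrite tdistC (tdist_out_subtree (idx_gt0 z) (off_z v vl)).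
have := tdist_triangle (idx u) (idx z)./2 (idx v).
by rewrite [tdist _./2 _]tdistC size_cat; lia.
Qed.

Definition side_path (b : bool) (u v : V) : seq V := map (vertex b) (tpath (idx u) (idx v)).

Lemma tpath_range u v : all (fun k => 0 < k < 2 ^ r.+1) (idx u :: tpath (idx u) (idx v)).
Proof.
apply/allP => k; rewrite inE => /predU1P[->|]; first by rewrite idx_gt0 idx_lt.
case/(mem_tpath (idx_gt0 u) (idx_gt0 v)) => [->|k_le]; first by rewrite idx_gt0 idx_lt.
by have := idx_lt u; have := idx_lt v; rewrite expnS; lia.
Qed.

Lemma mem_side_path b u v y : on_side b v -> y \in side_path b u v ->
  y = v \/ ~~ is_leaf y.
Proof.
move=> vb /mapP[k kp ->].
have k_range : 0 < k < 2 ^ r.+1 by have /allP := tpath_range u v; apply; rewrite inE kp orbT.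
case: (mem_tpath (idx_gt0 u) (idx_gt0 v) kp) => [->|k_le]; first by left; rewrite vertex_idx.
right; rewrite -idx_ltn idx_vertex //.
by have := idx_lt u; have := idx_lt v; rewrite expnS; lia.
Qed.

Lemma side_walk b u v : on_side b u -> on_side b v -> walk adj u v (side_path b u v).
Proof.
move=> ub vb; split; last by rewrite -{1}(vertex_idx ub) last_map tpath_last vertex_idx.
rewrite -{1}(vertex_idx ub) path_map.
apply: (sub_in_path (P := fun k => 0 < k < 2 ^ r.+1)) (tpath_range u v) (tpath_path _ _).
by move=> i j; apply: adj_vertex.
Qed.

Definition geodesic (u v : V) (p : seq V) : Prop :=
  walk adj u v p /\ size p = tdist (idx u) (idx v).

Lemma side_geodesic b u v : on_side b u -> on_side b v -> geodesic u v (side_path b u v).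
Proof. by move=> ub vb; split; [apply: side_walk | rewrite size_map]. Qed.

Lemma shortest_geodesic b u v p : on_side b u -> on_side b v ->
  shortest_path adj u v p -> geodesic u v p.
Proof.
move=> ub vb [uvp p_min]; split => //; apply/eqP; rewrite eqn_leq walk_tdist // andbT.
by have [/p_min + <-] := side_geodesic ub vb.
Qed.

Lemma geodesic_split u v p w : geodesic u v p -> w \in u :: p ->
  exists p1 p2, [/\ p = p1 ++ p2, geodesic u w p1 & geodesic w v p2].
Proof.
case=> uvp p_size /(walk_split uvp) [p1 [p2 [p_eq uw wv]]].
have := walk_tdist uw; have := walk_tdist wv.
have := tdist_triangle (idx u) (idx w) (idx v).
rewrite p_eq size_cat in p_size => tri wv_ge uw_ge.
by exists p1, p2; split=> //; split=> //; lia.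
Qed.

Lemma geodesic_copy u v p : geodesic u v p -> ~~ is_leaf u -> ~~ is_leaf v ->
  copy u = copy v.
Proof.
case=> uvp p_size ul vl; apply/eqP/negPn/negP => /(walk_across_copies uvp ul vl).
by rewrite p_size; lia.
Qed.

Lemma geodesic_internal_copy u v p y y' : geodesic u v p ->
  y \in u :: p -> y' \in u :: p -> ~~ is_leaf y -> ~~ is_leaf y' -> copy y = copy y'.
Proof.
move=> uvp yp y'p yl y'l; have [p1 [p2 [p_eq uy yv]]] := geodesic_split uvp yp.
move: y'p; rewrite p_eq -cat_cons mem_cat => /orP[y'p1|y'p2].
  have [q1 [q2 [_ _ y'y]]] := geodesic_split uy y'p1.
  by rewrite (geodesic_copy y'y).
have [q1 [q2 [_ yy' _]]] := geodesic_split yv (mem_behead (s := y :: p2) y'p2).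
exact: geodesic_copy yy' yl y'l.
Qed.

Lemma geodesic_shortest u v p : geodesic u v p -> shortest_path adj u v p.
Proof. by case=> uvp p_size; split => // q /walk_tdist; rewrite p_size. Qed.

Lemma leaves_visible u v : is_leaf u -> visible adj leaves u v.
Proof.
move=> ul; have ub := on_side_leaf (copy v) ul.
have vb : on_side (copy v) v by rewrite /on_side eqxx orbT.
exists (side_path (copy v) u v); split; first exact/geodesic_shortest/side_geodesic.
move=> x /predU1P[-> _|/(mem_side_path vb)[-> _|]]; rewrite ?eqxx ?orbT //.
by rewrite inE => /negbTE ->.
Qed.

Lemma leaves_omv : outer_mutual_visibility_set adj leaves.
Proof. by split => u v; rewrite inE => ul _; apply: leaves_visible. Qed.

Lemma card_leaves : #|leaves| = 2 ^ r.
Proof.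
pose leaf_at (i : 'I_(2 ^ r)) := vertex false (2 ^ r + i).
have range (i : 'I_(2 ^ r)) : 0 < 2 ^ r + i < 2 ^ r.+1.
  by have := ltn_ord i; have := expn_gt0 2 r; rewrite expnS; lia.
have -> : leaves = [set leaf_at i | i : 'I_(2 ^ r)].
  apply/setP => x; rewrite inE; apply/idP/imsetP => [xl|[i _ ->]].
    have i_lt : idx x - 2 ^ r < 2 ^ r by have := idx_lt x; move: xl; rewrite /is_leaf expnS; lia.
    by exists (Ordinal i_lt); rewrite // /leaf_at /= subnKC // vertex_idx // on_side_leaf.
  by rewrite /is_leaf idx_vertex ?leq_addr.
rewrite card_imset ?card_ord // => i j /(congr1 idx).
by rewrite !idx_vertex // => /addnI /val_inj.
Qed.

(* The leftmost ([b = false]) or rightmost ([b = true]) leaf index below [k]. *)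
Definition descent (b : bool) (k : nat) : nat :=
  let d := r - trunc_log 2 k in k * 2 ^ d + b * (2 ^ d).-1.

Lemma descent_spec b k : 0 < k < 2 ^ r ->
  [/\ 2 ^ r <= descent b k < 2 ^ r.+1, in_subtree k (descent b k) & odd (descent b k) = b].
Proof.
case/andP=> k_gt0 k_lt; rewrite /descent; set t := trunc_log 2 k; set d := r - t.
have /andP[lo hi] : 2 ^ t <= k < 2 ^ t.+1 by apply: trunc_log_bounds.
have t_lt : t < r by rewrite -(ltn_exp2l _ _ (ltnSn 1)); apply: leq_ltn_trans lo k_lt.
have d_gt0 : 0 < d by rewrite subn_gt0.
have pow_r_split : 2 ^ r = 2 ^ t * 2 ^ d by rewrite -expnD subnKC // ltnW.
have pow_d_gt1 : 1 < 2 ^ d by rewrite -{1}(expn0 2) ltn_exp2l.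
have rest_lt : b * (2 ^ d).-1 < 2 ^ d by case: b; rewrite /= ?mul1n ?mul0n; lia.
have Q_even : odd (2 ^ d) = false by rewrite oddX orbF eqn0Ngt d_gt0.
split.
- by rewrite expnS pow_r_split; move: hi; rewrite expnS; nia.
- by exists d; rewrite divnMDl ?expn_gt0 // divn_small // addn0.
- rewrite oddD oddM Q_even andbF /=; case: b {rest_lt} => //=.
  by rewrite mul1n -subn1 oddB ?Q_even // ltnW.
Qed.

Definition leaf_below (b : bool) (x : V) : V := vertex false (descent b (idx x)).

Lemma leaf_below_spec b x : ~~ is_leaf x ->
  [/\ is_leaf (leaf_below b x), in_subtree (idx x) (idx (leaf_below b x))
    & odd (idx (leaf_below b x)) = b].
Proof.
rewrite -idx_ltn => x_lt; have x_range : 0 < idx x < 2 ^ r by rewrite idx_gt0.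
have [/andP[lo hi] x_s parity] := descent_spec b x_range.
have s_range : 0 < descent b (idx x) < 2 ^ r.+1 by rewrite hi andbT (leq_trans _ lo) ?expn_gt0.
by rewrite /leaf_below /is_leaf idx_vertex.
Qed.

Definition leaf_of (x : V) : V := if is_leaf x then x else leaf_below (copy x) x.

Lemma leaf_of_leaf x : is_leaf (leaf_of x).
Proof. by rewrite /leaf_of; case: ifPn => // /(leaf_below_spec (copy x)) []. Qed.

Lemma leaf_of_internal x : ~~ is_leaf x ->
  in_subtree (idx x) (idx (leaf_of x)) /\ odd (idx (leaf_of x)) = copy x.
Proof. by move=> xl; rewrite /leaf_of (negbTE xl); have [] := leaf_below_spec (copy x) xl. Qed.

(** * Outer mutual-visibility sets of GT(r) *)

Section OuterMutualVisibility.
Variable S : {set V}.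
Hypothesis S_omv : outer_mutual_visibility_set adj S.

Lemma omv_visible u v : u \in S -> visible adj S u v.
Proof.
by case: S_omv => mv omv uS; case: (boolP (v \in S)) => vS; [apply: mv | apply: omv].
Qed.

Lemma not_visible_through x u v : x \in S -> ~~ is_leaf x ->
  on_side (copy x) u -> on_side (copy x) v -> ~~ is_leaf u || ~~ is_leaf v ->
  x != u -> x != v -> (forall p, walk adj u v p -> idx x \in map idx (u :: p)) ->
  ~ visible adj S u v.
Proof.
move=> xS xl ub vb uv_int xu xv meets [p [uvp avoid]].
have geo := shortest_geodesic ub vb uvp.
have /mapP[y yp y_idx] := meets p uvp.1.
have yl : ~~ is_leaf y by rewrite -idx_ltn -y_idx idx_ltn.
have vp : v \in u :: p by case: uvp.1 => _ <-; apply: mem_last.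
have y_copy : copy y = copy x.
  case/orP: uv_int => wl; [move: ub | move: vb]; rewrite on_side_internal // => /eqP <-.
    exact: geodesic_internal_copy geo yp (mem_head _ _) yl wl.
  exact: geodesic_internal_copy geo yp vp yl wl.
have yx : y = x by apply: idx_copy_inj.
by have := avoid y yp; rewrite yx xS (negbTE xu) (negbTE xv) => /(_ isT).
Qed.

Lemma omv_blocked x u w : x \in S -> ~~ is_leaf x -> u \in S -> u != x ->
  on_side (copy x) u -> 0 < w < 2 ^ r.+1 -> w != idx x -> ~~ is_leaf u || (w < 2 ^ r) ->
  (forall p, walk adj u (vertex (copy x) w) p -> idx x \in map idx (u :: p)) -> False.
Proof.
move=> xS xl uS ux ub w_range wx uw_int meets.
apply: (not_visible_through xS xl ub) (omv_visible (vertex (copy x) w) uS) => //.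
- exact: on_side_vertex.
- by case/orP: uw_int => [-> //|w_lt]; apply/orP; right; rewrite -idx_ltn idx_vertex.
- by rewrite eq_sym.
- by apply: contra_neq wx => ->; rewrite idx_vertex.
Qed.

Hypothesis r_ge2 : 2 <= r.

Lemma two_exp_ge4 : 4 <= 2 ^ r.
Proof. by rewrite (@leq_exp2l 2 2 r). Qed.

Lemma omv_same_side_not_below x u : x \in S -> ~~ is_leaf x -> u \in S -> u != x ->
  on_side (copy x) u -> ~ in_subtree (idx x) (idx u).
Proof.
move=> xS xl uS ux ub; set k := idx x => ku.
have k_range : 0 < k < 2 ^ r by rewrite idx_gt0 idx_ltn.
have r4 := two_exp_ge4.
have uk : idx u != k.
  by apply: contraNneq ux => uk; rewrite -(vertex_idx ub) uk vertex_idx ?on_side_internal.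
have [c ck cu] := in_subtree_child ku uk.
(* [w] is the parent of [x], or the other child of the root if [x] is the root. *)
have [w [/andP[w_gt0 w_lt] wk wc]] : exists w, [/\ 0 < w < 2 ^ r, w != k & ~ in_subtree c w].
  case: (eqVneq k 1) => [k1|k_neq1]; [exists (5 - c) | exists k./2];
    by split; try (case/in_subtreeP => [|/in_subtree_leq]); lia.
apply: (omv_blocked xS xl uS ux ub (w := w)); rewrite ?w_gt0 ?w_lt ?orbT //=.
  by rewrite expnS; lia.
move=> p /walk_tree[pp pl]; rewrite inE -/k -ck (path_exit_subtree pp cu) ?orbT //.
by rewrite pl idx_vertex //; rewrite expnS; lia.
Qed.

Lemma omv_same_side x u : x \in S -> ~~ is_leaf x -> u \in S -> u != x ->
  on_side (copy x) u -> is_leaf u /\ ~ in_subtree (idx x) (idx u).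
Proof.
move=> xS xl uS ux ub; have below := omv_same_side_not_below xS xl uS ux ub.
split=> //; apply/negPn/negP => ul; set k := idx x in below.
have k_range : 0 < k < 2 ^ r by rewrite idx_gt0 idx_ltn.
have k2_range : 0 < k.*2 < 2 ^ r.+1 by rewrite expnS; lia.
apply: (omv_blocked xS xl uS ux ub (w := k.*2)); rewrite ?ul //; first by lia.
move=> p /walk_tree[pp pl]; rewrite /= inE (path_enter_subtree pp below) ?orbT //.
by rewrite pl idx_vertex //; apply: in_subtree_half; rewrite doubleK; apply: in_subtree_refl.
Qed.

Lemma omv_internal_eq x y : x \in S -> y \in S -> ~~ is_leaf x -> ~~ is_leaf y ->
  copy x = copy y -> x = y.
Proof.
move=> xS yS xl yl xy; apply/eqP/negPn/negP => xny.
have yb : on_side (copy x) y by rewrite on_side_internal // xy.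
have yx : y != x by rewrite eq_sym.
by have [yl' _] := omv_same_side xS xl yS yx yb; rewrite yl' in yl.
Qed.

Lemma omv_leaf_not_below x u : x \in S -> ~~ is_leaf x -> u \in S -> is_leaf u ->
  ~ in_subtree (idx x) (idx u).
Proof.
move=> xS xl uS ul; apply: (omv_same_side xS xl uS _ (on_side_leaf _ ul)).2.
by apply: contraNneq xl => <-.
Qed.

Lemma omv_leaf_exists : 2 < #|S| -> exists2 u, u \in S & is_leaf u.
Proof.
move=> S_gt2; apply/exists_inP; apply: contraTT S_gt2; rewrite negb_exists_in -leqNgt.
move/forall_inP => S_int; rewrite -(card_in_imset (f := copy)).
  by rewrite (leq_trans (max_card _)) ?card_bool.
by move=> x y xS yS; apply: omv_internal_eq; rewrite ?S_int.
Qed.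

Lemma omv_no_shared_leaf x y u z : x \in S -> y \in S -> ~~ is_leaf x -> ~~ is_leaf y ->
  copy x != copy y -> u \in S -> is_leaf u -> 2 ^ r <= z < 2 ^ r.+1 ->
  in_subtree (idx x) z -> in_subtree (idx y) z -> False.
Proof.
move=> xS yS xl yl xy uS ul z_range xz yz.
have z_leaf : 0 < z < 2 ^ r.+1 by move: z_range; have := expn_gt0 2 r; lia.
set v := vertex false z.
have vl : is_leaf v by rewrite /is_leaf idx_vertex //; case/andP: z_range.
have [p [uvp avoid]] := omv_visible v uS.
have geo := shortest_geodesic (on_side_leaf false ul) (on_side_leaf false vl) uvp.
have [pp pl] := walk_tree uvp.1.
have meets w : w \in S -> ~~ is_leaf w -> in_subtree (idx w) z ->
    exists2 t, t \in u :: p & idx t = idx w /\ copy t != copy w.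
  move=> wS wl wz; have wu := omv_leaf_not_below wS wl uS ul.
  have /mapP[t tp tw] : idx w \in map idx p by rewrite (path_enter_subtree pp wu) // pl idx_vertex.
  exists t; rewrite ?inE ?tp ?orbT //; split=> //; apply/negP => /eqP tw'.
  have := avoid t; rewrite inE tp orbT (idx_copy_inj (esym tw) tw') wS => /(_ isT isT).
  by case/orP => /eqP wuv; move: wl; rewrite wuv ?ul ?vl.
have [t tp [tx tx']] := meets x xS xl xz; have [t' t'p [ty ty']] := meets y yS yl yz.
have tl : ~~ is_leaf t by rewrite -idx_ltn tx idx_ltn.
have t'l : ~~ is_leaf t' by rewrite -idx_ltn ty idx_ltn.
move: (geodesic_internal_copy geo tp t'p tl t'l) tx' ty' xy.
by case: (copy t); case: (copy t'); case: (copy x); case: (copy y).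
Qed.

Lemma omv_leaf_of_inj : {in S &, injective leaf_of}.
Proof.
have mixed x y : x \in S -> y \in S -> is_leaf x -> ~~ is_leaf y -> leaf_of x != leaf_of y.
  move=> xS yS xl yl; apply/eqP => xy; apply: (omv_leaf_not_below yS yl xS xl).
  by have [+ _] := leaf_of_internal yl; rewrite -xy /leaf_of xl.
move=> x y xS yS; case: (boolP (is_leaf x)) => xl; case: (boolP (is_leaf y)) => yl.
- by rewrite /leaf_of xl yl.
- by move/eqP; rewrite (negbTE (mixed x y xS yS xl yl)).
- by move/esym/eqP; rewrite (negbTE (mixed y x yS xS yl xl)).
- move=> xy; apply: omv_internal_eq => //.
  by have [_ <-] := leaf_of_internal xl; have [_ <-] := leaf_of_internal yl; rewrite xy.
Qed.

Lemma omv_card_leq : #|S| <= 2 ^ r.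
Proof.
rewrite -card_leaves -(card_in_imset omv_leaf_of_inj); apply: subset_leq_card.
by apply/subsetP => _ /imsetP[x _ ->]; rewrite inE leaf_of_leaf.
Qed.

Lemma omv_card_eq : #|S| = 2 ^ r -> S = leaves.
Proof.
move=> S_card; have leaves_img : leaf_of @: S = leaves.
  apply/eqP; rewrite eqEcard card_leaves (card_in_imset omv_leaf_of_inj) S_card leqnn andbT.
  by apply/subsetP => _ /imsetP[x _ ->]; rewrite inE leaf_of_leaf.
apply/eqP; rewrite eqEcard card_leaves S_card leqnn andbT; apply/subsetP => x xS.
rewrite inE; apply/negPn/negP => xl.
have [sl xs s_odd] := leaf_below_spec (~~ copy x) xl.
have : leaf_below (~~ copy x) x \in leaf_of @: S by rewrite leaves_img inE.
case/imsetP => y yS s_eq; have yl : ~~ is_leaf y.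
  apply/negP => yl; apply: (omv_leaf_not_below xS xl yS yl).
  by move: xs; rewrite s_eq /leaf_of yl.
have [y_s y_odd] := leaf_of_internal yl.
have xy : copy x != copy y by rewrite -y_odd -s_eq s_odd; case: (copy x).
have [u uS ul] : exists2 u, u \in S & is_leaf u.
  by apply: omv_leaf_exists; rewrite S_card (leq_trans _ two_exp_ge4).
apply: (omv_no_shared_leaf xS yS xl yl xy uS ul _ xs); last by rewrite s_eq.
by rewrite idx_lt andbT.
Qed.

End OuterMutualVisibility.
End GluedTree.

Theorem mainTheorem4 (r : nat) (hr : 2 <= r) :
  (forall S : {set GTV r}, muo_set (@GTadj r) S -> #|S| = 2 ^ r) /\
  (exists! S : {set GTV r}, muo_set (@GTadj r) S).
Proof.
have muo_card S : muo_set (@GTadj r) S -> #|S| = 2 ^ r.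
  case=> S_omv S_max; apply/eqP; rewrite eqn_leq omv_card_leq //=.
  by rewrite -{1}(card_leaves r) S_max //; apply: leaves_omv.
split=> //; exists (leaves r); split.
  by split=> [|S' /omv_card_leq]; rewrite ?card_leaves //; [apply: leaves_omv | apply].
by move=> S S_muo; rewrite (omv_card_eq S_muo.1 hr (muo_card S S_muo)).
Qed.
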